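(* Let $G$ be a perfectly labeled graph on $[n]$ which is crossing closed. Then $G$ is upper crossing closed with respect to the colexicographic order on $E(G)$, and also with respect to the lexicographic order on $E(G)$.
   Context: Graphs are finite simple graphs with vertex set $[n]$; edges are written $ij$ with $i<j$. Two edges $a_1a_2$ and $b_1b_2$ cross if $a_1<b_1<a_2<b_2$ or $b_1<a_1<b_2<a_2$. $G$ is perfectly labeled if whenever $ik,jk\in E(G)$ with $i<j<k$, also $ij\in E(G)$. Lexicographic order: $ab\lhd a'b'$ iff $a<a'$, or $a=a'$ and $b<b'$; colexicographic order: $ab\lhd a'b'$ iff $b<b'$, or $b=b'$ and $a<a'$. Two crossing edges $e,f$ are crossing closed if among all induced connected subgraphs of $G$ containing $e$ and $f$ there is a unique minimal one under containment, denoted $J(e,f)$; $G$ is crossing closed if all pairs of crossing edges are. $G$ is upper crossing closed with respect to a total order $\unlhd$ on $E(G)$ if it is crossing closed and for every pair of crossing edges $e,f$, $J(e,f)$ contains an edge $h$ with $h\lhd e$ and $h\lhd f$. *)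

From mathcomp Require Import all_boot.
Set Implicit Arguments. Unset Strict Implicit. Unset Printing Implicit Defensive.

(* A finite simple graph on the vertex set [n] is modelled by vertices 'I_n
   (labels 0..n-1, in the same order as 1..n) and a symmetric irreflexive
   adjacency relation E. *)

Definition simple_graph n (E : rel 'I_n) : Prop :=
  symmetric E /\ irreflexive E.

Definition edge_of n (E : rel 'I_n) (e : 'I_n * 'I_n) : bool :=
  (e.1 < e.2) && E e.1 e.2.

Definition cross n (e f : 'I_n * 'I_n) : bool :=
  ((e.1 < f.1) && (f.1 < e.2) && (e.2 < f.2)) ||
  ((f.1 < e.1) && (e.1 < f.2) && (f.2 < e.2)).

Definition perfectly_labeled n (E : rel 'I_n) : Prop :=
  forall i j k : 'I_n, i < j -> j < k -> E i k -> E j k -> E i j.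

Definition lex_lt n (e f : 'I_n * 'I_n) : bool :=
  (e.1 < f.1) || ((e.1 == f.1) && (e.2 < f.2)).

Definition colex_lt n (e f : 'I_n * 'I_n) : bool :=
  (e.2 < f.2) || ((e.2 == f.2) && (e.1 < f.1)).

Definition induced_connected n (E : rel 'I_n) (S : {set 'I_n}) : Prop :=
  S != set0 /\
  forall x y, x \in S -> y \in S ->
    connect (fun u v => [&& E u v, u \in S & v \in S]) x y.

Definition conn_containing n (E : rel 'I_n) (e f : 'I_n * 'I_n)
  (S : {set 'I_n}) : Prop :=
  induced_connected E S /\
  [/\ e.1 \in S, e.2 \in S, f.1 \in S & f.2 \in S].

Definition minimal_conn_containing n (E : rel 'I_n) (e f : 'I_n * 'I_n)
  (S : {set 'I_n}) : Prop :=
  conn_containing E e f S /\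
  forall T : {set 'I_n}, conn_containing E e f T -> T \subset S -> T = S.

Definition is_J n (E : rel 'I_n) (e f : 'I_n * 'I_n) (J : {set 'I_n}) : Prop :=
  minimal_conn_containing E e f J /\
  forall T, minimal_conn_containing E e f T -> T = J.

Definition crossing_closed_pair n (E : rel 'I_n) (e f : 'I_n * 'I_n) : Prop :=
  exists J, is_J E e f J.

Definition crossing_closed n (E : rel 'I_n) : Prop :=
  forall e f, edge_of E e -> edge_of E f -> cross e f ->
    crossing_closed_pair E e f.

Definition upper_crossing_closed n (E : rel 'I_n)
  (lt : 'I_n * 'I_n -> 'I_n * 'I_n -> bool) : Prop :=
  crossing_closed E /\
  forall e f, edge_of E e -> edge_of E f -> cross e f ->
    forall J, is_J E e f J ->
      exists h, [/\ edge_of E h, h.1 \in J, h.2 \in J, lt h e & lt h f].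

From mathcomp Require Import all_boot.
From mathcomp Require Import zify.

Set Implicit Arguments. Unset Strict Implicit. Unset Printing Implicit Defensive.

(* In a perfectly labeled graph the lower neighbours of a vertex form a clique,
   so deleting the largest vertex of an induced subgraph never disconnects the
   remaining vertices.  Hence two vertices u < v joined inside a connected J
   are joined by a path using only vertices <= v, whose first edge h satisfies
   h.1 <= u and h.2 <= v.  For crossing edges e, f with e.1 < f.1 < e.2 < f.2,
   taking u = e.1 and v = f.1 yields an edge of J preceding both e and f in
   the lexicographic and in the colexicographic order. *)

Definition induced (T : finType) (E : rel T) (S : {set T}) : rel T :=
  fun a b => [&& E a b, a \in S & b \in S].

Section SimplicialVertex.

Variables (T : finType) (E : rel T).
Hypotheses (E_sym : symmetric E) (E_irr : irreflexive E).

Lemma induced_sym (S : {set T}) : symmetric (induced E S).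
Proof.
by move=> a b; rewrite /induced E_sym; case: (a \in S); case: (b \in S); rewrite ?andbF.
Qed.

Lemma connect_induced_setD1 (S : {set T}) (w : T) :
  (forall a b, a \in S -> b \in S -> E w a -> E w b -> a != b -> E a b) ->
  forall x y, x != w -> y != w -> connect (induced E S) x y ->
  connect (induced E (S :\ w)) x y.
Proof.
move=> clique.
(* Each visit of a path to w is replaced by one fixed neighbour of w. *)
pose phi a := if a == w then odflt w [pick z | E w z && (z \in S :\ w)] else a.
have step a b : induced E S a b -> connect (induced E (S :\ w)) (phi a) (phi b).
  move=> ab; wlog bw : a b ab / b != w.
    move=> gen; case: (eqVneq b w) => [bw | ]; last exact: gen.
    have aw : a != w by apply: contraTneq ab => ->; rewrite /induced bw E_irr.
    rewrite sym_connect_sym; last exact: induced_sym.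
    by apply: gen; rewrite // induced_sym.
  case/and3P: ab => Eab aS bS; rewrite /phi (negbTE bw).
  case: (eqVneq a w) => [aw | aw]; last first.
    by apply: connect1; rewrite /induced !inE aw bw Eab aS bS.
  subst a; case: pickP => [z /andP[Ewz zSw] | none] /=; last first.
    by have := none b; rewrite Eab !inE bw bS.
  case: (eqVneq z b) => [-> // | zb]; apply: connect1.
  have zS : z \in S by move: zSw; rewrite !inE => /andP[].
  by rewrite /induced zSw !inE bw bS clique.
have phi_connect x y :
    connect (induced E S) x y -> connect (induced E (S :\ w)) (phi x) (phi y).
  case/connectP=> p; elim: p x => [_ _ -> // | a p IH] x /andP[xa pa] ey.
  exact: connect_trans (step _ _ xa) (IH a pa ey).
by move=> x y xw yw /phi_connect; rewrite /phi (negbTE xw) (negbTE yw).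
Qed.

End SimplicialVertex.

Section PerfectlyLabeled.

Variables (n : nat) (E : rel 'I_n).
Hypotheses (E_sym : symmetric E) (E_irr : irreflexive E).
Hypothesis E_pl : perfectly_labeled E.

Definition below (S : {set 'I_n}) (b : nat) : {set 'I_n} := [set z in S | z < b].

Lemma perfectly_labeled_lower_clique (w a c : 'I_n) :
  a < w -> c < w -> E w a -> E w c -> a != c -> E a c.
Proof.
rewrite ![E w _]E_sym => aw cw Eaw Ecw ac_neq.
case: (ltngtP a c) => [ac | ca | /val_inj eac].
- exact: E_pl ac cw Eaw Ecw.
- by rewrite E_sym (E_pl ca aw Ecw Eaw).
- by rewrite eac eqxx in ac_neq.
Qed.

Lemma connect_induced_below_succ (S : {set 'I_n}) (b : nat) (x y : 'I_n) :
  b < n -> x < b -> y < b ->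
  connect (induced E (below S b.+1)) x y -> connect (induced E (below S b)) x y.
Proof.
move=> bn xb yb; pose w := Ordinal bn.
have -> : below S b = below S b.+1 :\ w.
  by apply/setP => z; rewrite !inE -val_eqE /= ltnS ltn_neqAle andbCA.
have [xw yw] : x != w /\ y != w by rewrite -!val_eqE /= !neq_ltn xb yb.
apply: connect_induced_setD1 => //.
move=> a c; rewrite !inE !ltnS => /andP[_ ab] /andP[_ cb] Ewa Ewc.
have lt_w (z : 'I_n) : z <= b -> E w z -> z < w.
  by rewrite leq_eqVlt -[b]/(val w) val_eqE => /predU1P[-> | //]; rewrite E_irr.
exact: perfectly_labeled_lower_clique (lt_w a ab Ewa) (lt_w c cb Ewc) Ewa Ewc.
Qed.

Lemma connect_induced_below (S : {set 'I_n}) (b : nat) (x y : 'I_n) :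
  x < b -> y < b ->
  connect (induced E S) x y -> connect (induced E (below S b)) x y.
Proof.
move Hd : (n - b) => d; elim: d b Hd => [|d IH] b Hd xb yb Sxy.
  suff -> : below S b = S by [].
  by apply/setP => z; rewrite inE (leq_trans (ltn_ord z)) ?andbT // -subn_eq0 Hd.
have bn : b < n by rewrite -subn_gt0 Hd.
apply: connect_induced_below_succ => //.
by apply: IH; rewrite ?subnS ?Hd // ltnW.
Qed.

Lemma connect_induced_lower_edge (S : {set 'I_n}) (u v : 'I_n) :
  u < v -> connect (induced E S) u v ->
  exists h, [/\ edge_of E h, h.1 \in S, h.2 \in S, h.1 <= u & h.2 <= v].
Proof.
move=> uv /(@connect_induced_below _ v.+1 u v (ltnW uv) (ltnSn v)) /connectP[].
case=> [_ vu | p p'] /=; first by rewrite vu ltnn in uv.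
case/andP=> /and3P[Eup]; rewrite !inE !ltnS => /andP[uS _] /andP[pS pv] _ _.
case: (ltngtP u p) => [up | pu | /val_inj eup].
- by exists (u, p); split => //; rewrite /edge_of /= up.
- exists (p, u); split; rewrite /= ?(ltnW pu) ?(ltnW uv) //.
  by rewrite /edge_of /= pu E_sym.
- by rewrite eup E_irr in Eup.
Qed.

End PerfectlyLabeled.

Lemma cross_lower_edge_lex_colex n (e f h : 'I_n * 'I_n) :
  cross e f -> h.1 < h.2 -> h.1 <= e.1 -> h.2 <= f.1 -> e.1 < f.1 ->
  [&& lex_lt h e, lex_lt h f, colex_lt h e & colex_lt h f].
Proof. by rewrite /cross /lex_lt /colex_lt -!val_eqE /=; lia. Qed.

Lemma cross_connect_lower_edge n (E : rel 'I_n) (S : {set 'I_n}) (e f : 'I_n * 'I_n) :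
  symmetric E -> irreflexive E -> perfectly_labeled E ->
  cross e f -> connect (induced E S) e.1 f.1 ->
  exists h, [/\ edge_of E h, h.1 \in S, h.2 \in S &
                [&& lex_lt h e, lex_lt h f, colex_lt h e & colex_lt h f]].
Proof.
move=> E_sym E_irr E_pl.
wlog ef : e f / e.1 < f.1.
  move=> gen; have [ef | fe] := ltnP e.1 f.1; first exact: gen.
  move=> ef_cross Sef; case: (gen f e) => [||| h [Eh hS1 hS2 /and4P[hf he hf' he']]].
  - by move: ef_cross fe; rewrite /cross; lia.
  - by rewrite /cross orbC.
  - by rewrite (sym_connect_sym (induced_sym E_sym S)).
  - by exists h; rewrite hf he hf' he'.
move=> ef_cross Sef.
have [h [Eh hS1 hS2 he hf]] := connect_induced_lower_edge E_sym E_irr E_pl ef Sef.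
by exists h; split => //; apply: cross_lower_edge_lex_colex => //; case/andP: Eh.
Qed.

Theorem proposition5p12 (n : nat) (E : rel 'I_n) :
  simple_graph E -> perfectly_labeled E -> crossing_closed E ->
  upper_crossing_closed E (@colex_lt n) /\ upper_crossing_closed E (@lex_lt n).
Proof.
move=> [E_sym E_irr] E_pl E_cc.
have lower_edge e f J : cross e f -> is_J E e f J ->
    exists h, [/\ edge_of E h, h.1 \in J, h.2 \in J &
                  [&& lex_lt h e, lex_lt h f, colex_lt h e & colex_lt h f]].
  move=> ef_cross [[[[_ J_conn] [e1J _ f1J _]] _] _].
  exact: cross_connect_lower_edge E_sym E_irr E_pl ef_cross (J_conn _ _ e1J f1J).
by split; split=> // e f _ _ ef J /(lower_edge e f J ef) [h [Eh h1 h2 /and4P[]]];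
  exists h.
Qed.
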